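(* Let $\mathcal G=((V,E),(V_1,V_2,V_\Diamond),\delta,w)$ be a stochastic game and let $\mathsf r$ be a real vector indexed by $V$ that satisfies the Bellman condition, with classes $C_1,\dots,C_k$. Let $i\in\{1,2\}$ and suppose Player $i$ follows a strategy such that, each time the token is on a vertex $v\in V_i$, the chosen successor lies in the same class as $v$. Then, for every initial vertex and every strategy of the other player, with probability $1$ the token eventually reaches a class $C_j$ (for some $1\le j\le k$) which it never leaves afterwards.
   Context: A stochastic game is $\mathcal{G}=((V,E),(V_1,V_2,V_\Diamond),\delta,w)$: a finite directed graph $(V,E)$ in which every vertex $v$ has a nonempty out-neighbour set $E(v)$, a partition of $V$ into Player 1, Player 2 and probabilistic vertices, a function $\delta$ giving each $v\in V_\Diamond$ a probability distribution $\delta(v)$ on $E(v)$, positive on every out-neighbour, and payoffs $w:E\to\mathbb{Q}$. The game proceeds by moving a token: from $v\in V_i$ Player $i$ chooses a successor, from $v\in V_\Diamond$ the successor $v'$ is chosen with probability $\delta(v)(v')$. Strategies are (deterministic) functions from finite histories ending in $V_i$ to successors; a strategy pair and initial vertex induce a probability measure on plays. For a real vector $\mathsf r=(r_v)_{v\in V}$, its classes $C_1,\dots,C_k$ are the maximal nonempty sets of vertices on which $\mathsf r$ is constant. $\mathsf r$ satisfies the Bellman condition if for every $v$: $r_v=\max_{v'\in E(v)}r_{v'}$ if $v\in V_1$, $r_v=\min_{v'\in E(v)}r_{v'}$ if $v\in V_2$, $r_v=\sum_{v'\in E(v)}\delta(v)(v')r_{v'}$ if $v\in V_\Diamond$. 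*)

From HB Require Import structures.
From mathcomp Require Import all_boot all_order all_algebra.
From mathcomp Require Import all_classical all_reals all_analysis.
Set Implicit Arguments. Unset Strict Implicit. Unset Printing Implicit Defensive.
Import Order.TTheory GRing.Theory Num.Theory.
Local Open Scope classical_set_scope.
Local Open Scope ring_scope.

Inductive owner_t := Player1 | Player2 | Random.

Record stoch_game (R : realType) (V : finType) := StochGame {
  edges : V -> {set V};
  owner : V -> owner_t;          (* the partition (V_1, V_2, V_Diamond) *)
  delta : V -> V -> R;           (* delta(v)(v') for v in V_Diamond *)
  payoff : V -> V -> rat         (* w : E -> Q (irrelevant here) *)
}.

Definition wf_game (R : realType) (V : finType) (G : stoch_game R V) : Prop :=
  (forall v, (0 < #|edges G v|)%N) /\
  (forall v, owner G v = Random ->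
     (forall v', v' \in edges G v -> 0 < delta G v v') /\
     (forall v', v' \notin edges G v -> delta G v v' = 0) /\
     \sum_(v' in edges G v) delta G v v' = 1).

Definition bellman (R : realType) (V : finType) (G : stoch_game R V)
  (r : V -> R) : Prop :=
  forall v,
    match owner G v with
    | Player1 => (forall v', v' \in edges G v -> r v' <= r v) /\
                 (exists2 v', v' \in edges G v & r v' = r v)
    | Player2 => (forall v', v' \in edges G v -> r v <= r v') /\
                 (exists2 v', v' \in edges G v & r v' = r v)
    | Random => r v = \sum_(v' in edges G v) delta G v v' * r v'
    end.

Definition rclass (R : realType) (V : finType) (r : V -> R) (v : V) : {set V} :=
  [set u | r u == r v].
Definition classes (R : realType) (V : finType) (r : V -> R) : {set {set V}} :=
  [set rclass r v | v : V].

(* A (deterministic) strategy: given the history h of previously visited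
   vertices and the current vertex v, it returns a successor.  The full
   history is h ++ [:: v]. *)
Definition strategy (V : finType) := seq V -> V -> V.

Definition valid_strategy (R : realType) (V : finType) (G : stoch_game R V)
  (i : owner_t) (s : strategy V) : Prop :=
  forall h v, owner G v = i -> s h v \in edges G v.

Definition class_preserving (R : realType) (V : finType) (G : stoch_game R V)
  (r : V -> R) (i : owner_t) (s : strategy V) : Prop :=
  forall h v, owner G v = i -> s h v \in rclass r v.

Definition trans (R : realType) (V : finType) (G : stoch_game R V)
  (s1 s2 : strategy V) (h : seq V) (v v' : V) : R :=
  match owner G v with
  | Player1 => (s1 h v == v')%:R
  | Player2 => (s2 h v == v')%:R
  | Random => delta G v v'
  end.

Fixpoint path_prob (R : realType) (V : finType) (G : stoch_game R V)
  (s1 s2 : strategy V) (h : seq V) (v : V) (rest : seq V) : R :=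
  match rest with
  | [::] => 1
  | y :: rest' => trans G s1 s2 h v y * path_prob G s1 s2 (rcons h v) y rest'
  end.

Definition prefix_prob (R : realType) (V : finType) (G : stoch_game R V)
  (s1 s2 : strategy V) (v0 : V) (p : seq V) : R :=
  match p with
  | [::] => 1
  | x :: rest => (x == v0)%:R * path_prob G s1 s2 [::] x rest
  end.

(* The type is indexed by the initial vertex v0 only to provide a default
   element (the constant play), which the measurable-type structure needs. *)
Definition plays (V : finType) (v0 : V) := nat -> V.
HB.instance Definition _ (V : finType) (v0 : V) := Choice.on (plays v0).
HB.instance Definition _ (V : finType) (v0 : V) :=
  isPointed.Build (plays v0) (fun _ => v0).
Definition cylinder (V : finType) (v0 : V) (p : seq V) : set (plays v0) :=
  [set f | mkseq f (size p) = p].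
Definition cylinders (V : finType) (v0 : V) : set (set (plays v0)) :=
  [set @cylinder V v0 p | p in [set: seq V]].
Definition play (V : finType) (v0 : V) := g_sigma_algebraType (@cylinders V v0).

(* P is the probability measure on plays induced by the strategy pair
   (s1, s2) and initial vertex v0: it is determined by its values on
   cylinders. *)
Definition induced_measure (R : realType) (V : finType) (G : stoch_game R V)
  (s1 s2 : strategy V) (v0 : V) (P : probability (play v0) R) : Prop :=
  forall p : seq V, P (@cylinder V v0 p) = (prefix_prob G s1 s2 v0 p)%:E.

Definition eventually_trapped (R : realType) (V : finType) (v0 : V)
  (r : V -> R) : set (play v0) :=
  [set f | exists2 C, C \in classes r &
            exists n, forall m, (n <= m)%N -> f m \in C].

Arguments cylinder {V} v0 p.
Arguments cylinders {V} v0.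
Arguments play {V} v0.
Arguments induced_measure {R V} G s1 s2 v0 P.
Arguments eventually_trapped {R V} v0 r.

From HB Require Import structures.
From mathcomp Require Import all_boot all_order all_algebra.
From mathcomp Require Import all_classical all_reals all_analysis.
From mathcomp Require Import ring lra.
Import Order.TTheory GRing.Theory Num.Theory.
Local Open Scope classical_set_scope.
Local Open Scope ring_scope.

(* Say Player 1 keeps the token in its class (Player 2 is symmetric), let c be
   the least value of r, Y := (r - c)^2, and g > 0 the least square of a
   difference of two distinct values of r.  Each step raises Y in expectation
   by at least g times the probability of a class change: Player 1's moves
   change nothing, Player 2's moves can only raise r (Bellman condition), that
   is move it away from c, and at a random vertex r is a martingale, so the
   expected increment of Y is the conditional variance of r.  Hence the
   expected number of class changes within any horizon is at most max Y / g,
   and by Markov's inequality and continuity from below, the probability of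
   ever making K changes is at most max Y / (g K).  A play that is never
   trapped changes class infinitely often, so it has probability 0. *)

Fixpoint all_seqs (V : finType) (n : nat) : seq (seq V) :=
  if n is n'.+1 then [seq x :: q | x <- enum V, q <- all_seqs V n'] else [:: [::]].

Lemma mem_all_seqs (V : finType) n (p : seq V) : (p \in all_seqs V n) = (size p == n).
Proof.
elim: n p => [|n IH] [|x p] //=.
- by apply/negbTE/allpairsPdep => -[y [q [_ _ //]]].
- apply/allpairsPdep/idP.
    by case=> y [q [_]]; rewrite IH => /eqP <- [_ ->].
  by rewrite eqSS -IH => Hp; exists x, p; rewrite mem_enum.
Qed.

Lemma all_seqs_uniq (V : finType) n : uniq (all_seqs V n).
Proof.
elim: n => [|n IH] //=.
apply: allpairs_uniq => //; first exact: enum_uniq.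
by move=> [a b] [c d] _ _ /= [-> ->].
Qed.

Fixpoint class_changes {V : Type} {T : eqType} (r : V -> T) (v : V) (q : seq V) : nat :=
  if q is y :: q' then ((r y != r v) + class_changes r y q')%N else 0%N.

Definition play_changes {V : Type} {T : eqType} (r : V -> T) (f : nat -> V) (N : nat) :=
  (\sum_(k < N) (r (f k.+1) != r (f k)))%N.

Lemma class_changes_iota {V : Type} {T : eqType} (r : V -> T) (f : nat -> V) s N :
  class_changes r (f s) [seq f i | i <- iota s.+1 N] =
  (\sum_(s <= k < s + N) (r (f k.+1) != r (f k)))%N.
Proof.
elim: N s => [|N IH] s; first by rewrite addn0 big_geq.
by rewrite /= IH [in RHS]big_ltn ?addnS ?ltnS ?leq_addr // addSn.
Qed.

Lemma play_changesE {V : Type} {T : eqType} (r : V -> T) (f : nat -> V) N :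
  class_changes r (f 0%N) [seq f i | i <- iota 1 N] = play_changes r f N.
Proof. by rewrite (class_changes_iota r f 0) add0n big_mkord. Qed.

Lemma play_changesS {V : Type} {T : eqType} (r : V -> T) (f : nat -> V) N :
  play_changes r f N.+1 = (play_changes r f N + (r (f N.+1) != r (f N)))%N.
Proof. by rewrite /play_changes big_ord_recr. Qed.

Lemma play_changes_nondecreasing {V : Type} {T : eqType} (r : V -> T) (f : nat -> V) :
  {homo play_changes r f : N M / (N <= M)%N}.
Proof.
by apply: homo_leq => [//|y x z|N]; [exact: leq_trans | rewrite play_changesS leq_addr].
Qed.

Lemma play_changes_unbounded {V : Type} {T : eqType} (r : V -> T) (f : nat -> V) :
  ~ (exists n, forall k, r (f (n + k)%N) = r (f n)) ->
  forall K, exists N, (K <= play_changes r f N)%N.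
Proof.
move=> not_trapped; elim=> [|K [N KN]]; first by exists 0%N.
have [m Nm fm] : exists2 m, (N <= m)%N & r (f m.+1) != r (f m).
  apply: contrapT => all_eq; apply: not_trapped; exists N.
  elim=> [|k IH]; first by rewrite addn0.
  rewrite addnS -IH; apply/eqP/negPn/negP => fk.
  by apply: all_eq; exists (N + k)%N; rewrite ?leq_addr.
exists m.+1; rewrite play_changesS fm addn1 ltnS (leq_trans KN) //.
exact: play_changes_nondecreasing.
Qed.

Lemma sum_indicator_mul (R : pzSemiRingType) (V : finType) (a : V) (F : V -> R) :
  \sum_y (a == y)%:R * F y = F a.
Proof.
rewrite (bigD1 a) //= eqxx mul1r big1 ?addr0 // => y /negbTE.
by rewrite eq_sym => ->; rewrite mul0r.
Qed.

Lemma exists_sqr_gap {R : realDomainType} {V : finType} (r : V -> R) :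
  exists2 g : R, 0 < g & forall a b, g * (r b != r a)%:R <= (r b - r a) ^+ 2.
Proof.
exists (\big[Order.min/1]_(p : V * V | r p.2 != r p.1) (r p.2 - r p.1) ^+ 2).
  elim/big_ind: _ => // [x y x_gt0 y_gt0 | p rp]; first by rewrite lt_min x_gt0.
  by rewrite lt_def sqr_ge0 andbT sqrf_eq0 subr_eq0.
move=> a b; have [rab|] := eqVneq (r b) (r a); first by rewrite mulr0 sqr_ge0.
by rewrite mulr1 => rab; exact: (@bigmin_le_cond _ _ _ _ (a, b)).
Qed.

Lemma measure_le_nondecreasing_cover d (T : measurableType d) (R : realType)
    (mu : {measure set T -> \bar R}) (S : set T) (A : (set T)^nat) (b : \bar R) :
  measurable S -> (forall N, measurable (A N)) ->
  {homo A : n m / (n <= m)%N >-> (n <= m)%O} ->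
  S `<=` \bigcup_N A N -> (forall N, (mu (A N) <= b)%E) -> (mu S <= b)%E.
Proof.
move=> S_meas A_meas A_nd SA muA_le.
have UA_meas : measurable (\bigcup_N A N) := bigcupT_measurable _ A_meas.
apply: le_trans (le_measure _ _ _ SA) _; rewrite ?inE //.
have cvgA := nondecreasing_cvg_mu (mu := mu) A_meas UA_meas A_nd.
apply: (@le_trans _ _ (lim ((mu \o A) x @[x --> \oo]))); first by rewrite (cvg_lim _ cvgA).
apply: lime_le; last exact: nearW.
by apply/cvg_ex; exists (mu (\bigcup_N A N)).
Qed.

Lemma ereal_le_div_natr_eq0 (R : realType) (x : \bar R) (b : R) :
  (0 <= x)%E -> (forall K, (0 < K)%N -> (x <= (b / K%:R)%:E)%E) -> x = 0%E.
Proof.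
case: x => [x| |] //; last by move=> _ /(_ 1%N isT).
rewrite lee_fin => x_ge0 xb; congr _%:E; apply/eqP; rewrite eq_le x_ge0 andbT.
apply/negP => /negP; rewrite -ltNge => x_gt0.
pose K := (Num.Def.truncn (b / x)).+1.
have := xb K isT; rewrite lee_fin ler_pdivlMr ?ltr0n //.
by have := truncnS_gt (b / x); rewrite -/K ltr_pdivrMr //; nra.
Qed.

Section PathExpectation.
Context {R : realType} {V : finType} (G : stoch_game R V) (s1 s2 : strategy V).
Hypothesis HG : wf_game G.

Local Notation trans := (trans G s1 s2).
Local Notation path_prob := (path_prob G s1 s2).

Definition move (h : seq V) (v : V) : V :=
  if owner G v is Player2 then s2 h v else s1 h v.

Lemma trans_move h v y : owner G v <> Random -> trans h v y = (move h v == y)%:R.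
Proof. by rewrite /trans /move; case: (owner G v). Qed.

Lemma sum_delta_edges v (F : V -> R) : owner G v = Random ->
  \sum_y delta G v y * F y = \sum_(y in edges G v) delta G v y * F y.
Proof.
move=> /HG.2 [_ [delta0 _]]; rewrite (bigID (fun y => y \in edges G v)) /=.
by rewrite [X in _ + X]big1 ?addr0 // => y /delta0 ->; rewrite mul0r.
Qed.

Lemma trans_ge0 h v y : 0 <= trans h v y.
Proof.
rewrite /trans; case E: (owner G v) => //.
have [delta_gt0 [delta0 _]] := HG.2 v E.
by case: (boolP (y \in edges G v)) => [/delta_gt0/ltW | /delta0 ->].
Qed.

Lemma sum_trans h v : \sum_y trans h v y = 1.
Proof.
have [E|E] : owner G v <> Random \/ owner G v = Random by case: (owner G v); [left|left|right].
  by under eq_bigr do rewrite trans_move // -[_%:R]mulr1; rewrite sum_indicator_mul.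
have [_ [delta0 delta1]] := HG.2 v E.
rewrite /trans E (bigID (fun y => y \in edges G v)) /= delta1.
by rewrite [X in _ + X]big1 ?addr0 // => y /delta0.
Qed.

Lemma path_prob_ge0 h v q : 0 <= path_prob h v q.
Proof.
elim: q h v => [|y q IH] h v /=; first exact: ler01.
by rewrite mulr_ge0 // trans_ge0.
Qed.

Definition path_expect h v n (F : seq V -> R) :=
  \sum_(q <- all_seqs V n) path_prob h v q * F q.

Lemma path_expect0 h v F : path_expect h v 0 F = F [::].
Proof. by rewrite /path_expect big_seq1 mul1r. Qed.

Lemma path_expectS h v n F : path_expect h v n.+1 F =
  \sum_y trans h v y * path_expect (rcons h v) y n (fun q => F (y :: q)).
Proof.
rewrite /path_expect /= big_allpairs_dep big_enum /=; apply: eq_bigr => y _.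
by rewrite mulr_sumr; apply: eq_bigr => q _ /=; rewrite mulrA.
Qed.

Lemma eq_path_expect h v n F1 F2 :
  F1 =1 F2 -> path_expect h v n F1 = path_expect h v n F2.
Proof. by move=> eqF; apply: eq_bigr => q _; rewrite eqF. Qed.

Lemma ler_path_expect h v n F1 F2 :
  (forall q, F1 q <= F2 q) -> path_expect h v n F1 <= path_expect h v n F2.
Proof. by move=> leF; apply: ler_sum => q _; rewrite ler_wpM2l ?path_prob_ge0. Qed.

Lemma path_expectD h v n F1 F2 :
  path_expect h v n (fun q => F1 q + F2 q) = path_expect h v n F1 + path_expect h v n F2.
Proof. by rewrite /path_expect -big_split; apply: eq_bigr => q _; rewrite mulrDr. Qed.

Lemma path_expectZ h v n c F :
  path_expect h v n (fun q => c * F q) = c * path_expect h v n F.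
Proof. by rewrite /path_expect mulr_sumr; apply: eq_bigr => q _; rewrite mulrCA. Qed.

Lemma path_expect_cst h v n c : path_expect h v n (fun _ => c) = c.
Proof.
elim: n h v => [|n IH] h v; first exact: path_expect0.
rewrite path_expectS; under eq_bigr do rewrite IH.
by rewrite -mulr_suml sum_trans mul1r.
Qed.

Lemma prefix_prob_sum v0 N (Q : pred (seq V)) :
  \sum_(p <- all_seqs V N.+1 | Q p) prefix_prob G s1 s2 v0 p =
  path_expect [::] v0 N (fun q => (Q (v0 :: q))%:R).
Proof.
rewrite big_mkcond /= big_allpairs_dep big_enum /= (bigD1 v0) //= [X in _ + X]big1 ?addr0.
  by apply: eq_bigr => q _; rewrite eqxx; case: (Q _); rewrite ?mul1r ?mulr1 ?mulr0.
by move=> x /negbTE x_v0; apply: big1 => q _; rewrite x_v0 mul0r; case: (Q _).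
Qed.

Section Drift.
Variables (r Y : V -> R) (g : R).
Hypothesis drift : forall h v,
  0 <= \sum_y trans h v y * (Y y - Y v - g * (r y != r v)%:R).

Lemma path_expect_drift_ge0 h v n :
  0 <= path_expect h v n (fun q => Y (last v q) - Y v - g * (class_changes r v q)%:R).
Proof.
elim: n h v => [|n IH] h v; first by rewrite path_expect0 /= subrr mulr0 subr0.
rewrite path_expectS; apply: le_trans (drift h v) _; apply: ler_sum => y _.
rewrite ler_wpM2l ?trans_ge0 //.
rewrite (@eq_path_expect _ _ _ _ (fun q => (Y (last y q) - Y y - g * (class_changes r y q)%:R)
   + (Y y - Y v - g * (r y != r v)%:R))); last by move=> q /=; rewrite natrD; ring.
by rewrite path_expectD path_expect_cst lerDr IH.
Qed.

Lemma class_changes_tail_bound (g_gt0 : 0 < g) (Y_ge0 : forall v, 0 <= Y v)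
    (Ymax : R) (Y_le : forall v, Y v <= Ymax) K h v n :
  K%:R * path_expect h v n (fun q => (K <= class_changes r v q)%:R) <= Ymax / g.
Proof.
rewrite -path_expectZ ler_pdivlMr // mulrC.
apply: (@le_trans _ _ (g * path_expect h v n (fun q => (class_changes r v q)%:R))).
  rewrite ler_pM2l //; apply: ler_path_expect => q.
  by case: leqP => [Kq|_]; rewrite ?mulr0 // mulr1 ler_nat.
have := path_expect_drift_ge0 h v n.
rewrite (@eq_path_expect _ _ _ _ (fun q => (Y (last v q) - Y v) + - g * (class_changes r v q)%:R));
  last by move=> q; ring.
rewrite path_expectD path_expectZ mulNr subr_ge0 => /le_trans; apply.
rewrite -[X in _ <= X](path_expect_cst h v n); apply: ler_path_expect => q.
by have := Y_ge0 v; have := Y_le (last v q); lra.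
Qed.

End Drift.

Lemma sqr_potential_drift {r : V -> R} (Hr : bellman G r) {c : R}
    (away : forall h v, owner G v <> Random -> 0 <= (r v - c) * (r (move h v) - r v))
    {g : R} (gap : forall a b, g * (r b != r a)%:R <= (r b - r a) ^+ 2) h v :
  0 <= \sum_y trans h v y * ((r y - c) ^+ 2 - (r v - c) ^+ 2 - g * (r y != r v)%:R).
Proof.
have sqr_split y : (r y - c) ^+ 2 - (r v - c) ^+ 2 =
    (r y - r v) ^+ 2 + 2 * (r v - c) * (r y - r v) by ring.
have [E|E] : owner G v <> Random \/ owner G v = Random by case: (owner G v); [left|left|right].
  under eq_bigr do rewrite trans_move //; rewrite sum_indicator_mul sqr_split.
  by have := away h v E; have := gap v (move h v); nra.
have sum_delta : \sum_y delta G v y = 1 by have := sum_trans h v; rewrite /trans E.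
have mean : \sum_y delta G v y * r y = r v.
  by rewrite sum_delta_edges //; have := Hr v; rewrite E => <-.
rewrite /trans E (eq_bigr (fun y => delta G v y * ((r y - r v) ^+ 2 - g * (r y != r v)%:R)
    + 2 * (r v - c) * (delta G v y * r y - delta G v y * r v))); last first.
  by move=> y _; rewrite sqr_split; ring.
rewrite big_split /= -mulr_sumr /= sumrB mean -mulr_suml /= sum_delta mul1r subrr mulr0 addr0.
apply: sumr_ge0 => y _; apply: mulr_ge0; last by rewrite subr_ge0 gap.
by have := trans_ge0 h v y; rewrite /trans E.
Qed.

End PathExpectation.

Lemma class_preserving_moves_away {R : realType} {V : finType} {G : stoch_game R V}
    {r : V -> R} (Hr : bellman G r) {i : bool} {s1 s2 : strategy V}
    (Hs1 : valid_strategy G Player1 s1) (Hs2 : valid_strategy G Player2 s2)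
    (Hcls : if i then class_preserving G r Player1 s1
            else class_preserving G r Player2 s2) :
  exists c, forall h v, owner G v <> Random ->
    0 <= (r v - c) * (r (move G s1 s2 h v) - r v).
Proof.
case: i Hcls => Hcls; [exists (\big[Order.min/0]_u r u) | exists (\big[Order.max/0]_u r u)];
  move=> h v notR; rewrite /move; case E: (owner G v) notR => // _;
  have := Hr v; rewrite E => -[bellman_le _].
- by have := Hcls h v E; rewrite inE => /eqP ->; rewrite subrr mulr0.
- by rewrite mulr_ge0 // subr_ge0 ?bigmin_le // bellman_le // Hs2.
- by rewrite mulr_le0 // subr_le0 ?le_bigmax // bellman_le // Hs1.
- by have := Hcls h v E; rewrite inE => /eqP ->; rewrite subrr mulr0.
Qed.

Lemma cylinder_measurable {V : finType} (v0 : V) (p : seq V) :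
  measurable (cylinder v0 p : set (play v0)).
Proof. by apply: sub_sigma_algebra; exists p. Qed.

Lemma eventually_trappedP {R : realType} {V : finType} (v0 : V) (r : V -> R)
    (f : play v0) :
  eventually_trapped v0 r f <-> exists n, forall k, r (f (n + k)%N) = r (f n).
Proof.
split=> [[C /imsetP[v _ ->] [n trapped]] | [n trapped]].
  exists n => k; have := trapped (n + k)%N (leq_addr _ _); have := trapped n (leqnn _).
  by rewrite !inE => /eqP -> /eqP ->.
exists (rclass r (f n)); first exact: imset_f.
by exists n => m nm; rewrite inE -(subnKC nm) trapped.
Qed.

Lemma prefix_event_measurable {V : finType} (v0 : V) m (Q : pred (seq V)) :
  measurable [set f : play v0 | Q (mkseq f m)].
Proof.
suff -> : [set f : play v0 | Q (mkseq f m)] =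
    \big[setU/set0]_(p <- all_seqs V m | Q p) cylinder v0 p.
  by apply: bigsetU_measurable => p _; exact: cylinder_measurable.
rewrite -bigcup_seq_cond; apply/seteqP; split => f /=.
  move=> Qf; exists (mkseq f m); last by rewrite /cylinder /= size_mkseq.
  by rewrite /= mem_all_seqs size_mkseq eqxx.
by case=> p /andP[]; rewrite mem_all_seqs => /eqP <- Qp; rewrite /cylinder /= => ->.
Qed.

Lemma eventually_trapped_measurable {R : realType} {V : finType} (v0 : V) (r : V -> R) :
  measurable (eventually_trapped v0 r).
Proof.
have -> : eventually_trapped v0 r = \bigcup_n \bigcap_k [set f : play v0 |
    (fun p => r (nth v0 p (n + k)) == r (nth v0 p n)) (mkseq f (n + k).+1)].
  apply/seteqP; split => f.
    move/eventually_trappedP => [n trapped]; exists n => // k _.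
    by rewrite /= !nth_mkseq ?trapped // ltnS // leq_addr.
  case=> n _ trapped; apply/eventually_trappedP; exists n => k; have := trapped k I.
  by rewrite /= !nth_mkseq ?ltnS ?leq_addr // => /eqP.
apply: bigcupT_measurable => n; apply: bigcapT_measurable => k.
exact: (prefix_event_measurable v0 _ (fun p => r (nth v0 p (n + k)) == r (nth v0 p n))).
Qed.

Section PlayMeasure.
Context {R : realType} {V : finType} {G : stoch_game R V} {s1 s2 : strategy V}.
Context {v0 : V} {P : probability (play v0) R}.
Hypothesis HP : induced_measure G s1 s2 v0 P.

Lemma measure_prefix_event_seq m (Q : pred (seq V)) (s : seq (seq V)) :
  uniq s -> all (fun p => size p == m) s ->
  P [set f : play v0 | (mkseq f m \in s) && Q (mkseq f m)] =
  (\sum_(p <- s | Q p) prefix_prob G s1 s2 v0 p)%:E.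
Proof.
elim: s => [|p s IH] /=.
  have -> : [set f : play v0 | false] = set0 by apply/seteqP; split.
  by rewrite big_nil measure0.
move=> /andP[p_s s_uniq] /andP[/eqP p_m s_m]; rewrite big_cons.
case: (boolP (Q p)) => Qp; last first.
  rewrite -IH //; congr (P _); apply/seteqP; split => f /=; rewrite in_cons.
    by case/andP => /orP[/eqP fp|->] //; rewrite fp (negbTE Qp).
  by case/andP => -> ->; rewrite orbT.
have -> : [set f : play v0 | (mkseq f m \in p :: s) && Q (mkseq f m)] =
          cylinder v0 p `|` [set f | (mkseq f m \in s) && Q (mkseq f m)].
  apply/seteqP; split => f; rewrite /cylinder /= in_cons p_m.
    by case/andP => /orP[/eqP fp|fs] Qf; [left | right; apply/andP].
  by case=> [fp | /andP[-> ->]]; rewrite ?orbT // fp eqxx Qp.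
rewrite measureU.
- by rewrite EFinD -IH //; congr (_ + _); exact: HP.
- exact: cylinder_measurable.
- exact: (prefix_event_measurable v0 m (fun q => (q \in s) && Q q)).
apply/seteqP; split => f //= [fp /andP[fs _]].
by move: fp fs; rewrite /cylinder /= p_m => ->; rewrite (negbTE p_s).
Qed.

Lemma measure_prefix_event m (Q : pred (seq V)) :
  P [set f : play v0 | Q (mkseq f m)] =
  (\sum_(p <- all_seqs V m | Q p) prefix_prob G s1 s2 v0 p)%:E.
Proof.
rewrite -(measure_prefix_event_seq m) ?all_seqs_uniq //; last first.
  by apply/allP => p; rewrite mem_all_seqs.
by congr (P _); apply/seteqP; split => f /=; rewrite mem_all_seqs size_mkseq eqxx.
Qed.

Lemma play_changes_event (r : V -> R) K N :
  let A := [set f : play v0 | (K <= play_changes r f N)%N] in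
  measurable A /\
  P A = (path_expect G s1 s2 [::] v0 N (fun q => (K <= class_changes r v0 q)%:R))%:E.
Proof.
pose Q p := if p is x :: q then (K <= class_changes r x q)%N else false.
have -> : [set f : play v0 | (K <= play_changes r f N)%N] = [set f | Q (mkseq f N.+1)].
  by apply/seteqP; split => f; rewrite /= play_changesE.
split; first exact: (prefix_event_measurable v0 N.+1 Q).
by rewrite /= (measure_prefix_event N.+1 Q) prefix_prob_sum.
Qed.

End PlayMeasure.

Theorem proposition4 (R : realType) (V : finType) (G : stoch_game R V)
  (HG : wf_game G) (r : V -> R) (Hr : bellman G r)
  (i : bool) (s1 s2 : strategy V)
  (Hs1 : valid_strategy G Player1 s1) (Hs2 : valid_strategy G Player2 s2)
  (Hcls : if i then class_preserving G r Player1 s1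
                else class_preserving G r Player2 s2)
  (v0 : V) (P : probability (play v0) R)
  (HP : induced_measure G s1 s2 v0 P) :
  measurable (eventually_trapped v0 r) /\ P (eventually_trapped v0 r) = 1%:E.
Proof.
set T := eventually_trapped v0 r.
have T_meas : measurable T := eventually_trapped_measurable v0 r.
split => //; suff notT0 : P (~` T) = 0%E.
  by rewrite -[T]setCK probability_setC ?notT0 ?sube0 //; exact: measurableC.
have [c away] := class_preserving_moves_away Hr Hs1 Hs2 Hcls.
have [g g_gt0 gap] := exists_sqr_gap r.
pose Y v := (r v - c) ^+ 2.
have drift := sqr_potential_drift G s1 s2 HG Hr away gap.
apply: (@ereal_le_div_natr_eq0 _ _ ((\big[Order.max/0]_v Y v) / g)) => [|K K_gt0].
  exact: measure_ge0.
apply: (@measure_le_nondecreasing_cover _ _ _ P _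
  (fun N => [set f : play v0 | (K <= play_changes r f N)%N])).
- exact: measurableC.
- by move=> N; have [] := play_changes_event HP r K N.
- move=> N M NM; apply/subsetPset => f /= Kf.
  by apply: leq_trans Kf _; apply: play_changes_nondecreasing.
- move=> f notTf; have [N KN] : exists N, (K <= play_changes r f N)%N.
    by apply: play_changes_unbounded => trapped; apply: notTf; apply/eventually_trappedP.
  by exists N.
- move=> N /=; have [_ ->] := play_changes_event HP r K N.
  rewrite lee_fin ler_pdivlMr ?ltr0n // mulrC.
  apply: (@class_changes_tail_bound _ _ G s1 s2 HG r Y g drift g_gt0) => v.
    exact: sqr_ge0.
  exact: le_bigmax.
Qed.
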